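(* For $n\ge1$, $\lambda_n'(a)=\sum_{k=1}^{n-1}k\,\lambda_{n-k}(a)\lambda_k(a)$; moreover $\lambda_n(0)=(-1)^{n-1}/n$ and $\lambda_1(a)=1$.
   Context: Let $L(a,t)=\sum_{n\ge1}\lambda_n(a)t^n\in\mathbb Q[a][[t]]$ be the compositional inverse (in $t$) of $e^{-at}(e^t-1)$, equivalently the unique such series with $e^{L(a,t)}(1-te^{(a-1)L(a,t)})=1$. $\lambda_n'$ denotes the derivative in $a$. *)

From mathcomp Require Import all_boot all_order all_algebra.
Set Implicit Arguments. Unset Strict Implicit. Unset Printing Implicit Defensive.
Import GRing.Theory Num.Theory.
Local Open Scope ring_scope.

(* We work in Q[a][[t]]: elements of Q[a] are {poly rat} (variable 'X = a);
   a series in t is given by its coefficient sequence nat -> {poly rat};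
   truncations are polynomials in {poly {poly rat}} (variable 'X = t). *)

(* coefficient of t^i in e^{-a t} : (-a)^i / i! *)
Definition expma_coef (i : nat) : {poly rat} :=
  ((i`!)%:R^-1 : rat) *: (- 'X) ^+ i.

(* coefficient of t^i in e^t - 1 : [i >= 1] / i! *)
Definition expm1_coef (i : nat) : {poly rat} :=
  if (0 < i)%N then ((i`!)%:R^-1 : rat)%:P else 0.

(* coefficient of t^m in f(a,t) = e^{-a t} (e^t - 1)  (Cauchy product) *)
Definition fcoef (m : nat) : {poly rat} :=
  \sum_(j < m.+1) expma_coef j * expm1_coef (m - j).

Definition trunc_series (lam : nat -> {poly rat}) (N : nat) : {poly {poly rat}} :=
  \poly_(k < N.+1) lam k.

(* lam is the coefficient sequence of the compositional inverse (in t) of f: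
   lam 0 = 0 (so L = sum_{n>=1} lam n t^n) and f(a, L(a,t)) = t as formal
   power series, i.e. for every N, the coefficients of t^n, n <= N, of
   sum_{m<=N} fcoef m * (L mod t^{N+1})^m agree with those of t. *)
Definition is_comp_inverse (lam : nat -> {poly rat}) : Prop :=
  lam 0%N = 0 /\
  forall N n : nat, (n <= N)%N ->
    (\sum_(m < N.+1) fcoef m *: (trunc_series lam N) ^+ m)`_n = (n == 1%N)%:R.

From mathcomp Require Import all_boot all_order all_algebra.
From mathcomp Require Import ring zify.
Import GRing.Theory Num.Theory.
Set Implicit Arguments. Unset Strict Implicit. Unset Printing Implicit Defensive.
Local Open Scope ring_scope.

(* Write F(a, t) = e^{-at} (e^t - 1) = sum_m f_m(a) t^m and compute modulo powers
   of t.  Since d f_{m+1}/da = - f_m, i.e. dF/da = - t F, differentiating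
   F(a, L) = t in a and in t gives F'(L) dL/da = t L and F'(L) dL/dt = 1, where
   F' = dF/dt.  As F'(L) = 1 + O(t) is a unit, dL/da = t L dL/dt, whose
   coefficient of t^n is the formula for lambda_n'.  At a = 0 we have
   F = e^t - 1, so F' = 1 + F and F'(L) dL/dt = 1 becomes (1 + t) dL/dt = 1,
   i.e. L(0, t) = log(1 + t).  Existence: as f_0 = 0 and f_1 = 1, the coefficient
   of t^n in F(L) is lambda_n plus a polynomial in lambda_1, ..., lambda_{n-1},
   which determines lambda_n recursively. *)

Section EqModX.
Variable R : comNzRingType.
Implicit Types g p q r s : {poly R}.

Definition eqmodX (k : nat) p q := take_poly k p = take_poly k q.

Lemma eqmodXP k p q : eqmodX k p q <-> forall i, (i < k)%N -> p`_i = q`_i.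
Proof.
split=> [e i ik | e].
  by have /(congr1 (fun r => r`_i)) := e; rewrite !coef_take_poly ik.
by apply/polyP => i; rewrite !coef_take_poly; case: ifP => // /e.
Qed.

Lemma eqmodX_coef k p q i : eqmodX k p q -> (i < k)%N -> p`_i = q`_i.
Proof. by move=> /eqmodXP; apply. Qed.

Lemma eqmodX_refl k p : eqmodX k p p.
Proof. by []. Qed.

Lemma eqmodX_sym k p q : eqmodX k p q -> eqmodX k q p.
Proof. by []. Qed.

Lemma eqmodX_trans k p q r : eqmodX k p q -> eqmodX k q r -> eqmodX k p r.
Proof. exact: etrans. Qed.

Lemma eqmodXW k l p q : (l <= k)%N -> eqmodX k p q -> eqmodX l p q.
Proof.
by move=> lk /eqmodXP e; apply/eqmodXP => i il; apply: e; apply: leq_trans lk.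
Qed.

Lemma eqmodX_subr k p q : eqmodX k p q <-> eqmodX k (p - q) 0.
Proof.
rewrite /eqmodX take_polyD linearN take_poly0r.
by split=> [->|/eqP]; rewrite ?subrr // subr_eq0 => /eqP.
Qed.

Lemma eqmodXD k p q r s : eqmodX k p q -> eqmodX k r s -> eqmodX k (p + r) (q + s).
Proof. by rewrite /eqmodX !take_polyD => -> ->. Qed.

Lemma eqmodXZ k (c : R) p q : eqmodX k p q -> eqmodX k (c *: p) (c *: q).
Proof. by rewrite /eqmodX !take_polyZ => ->. Qed.

Lemma eqmodX_sum k (I : finType) (F G : I -> {poly R}) :
  (forall i, eqmodX k (F i) (G i)) -> eqmodX k (\sum_i F i) (\sum_i G i).
Proof. by move=> e; rewrite /eqmodX !take_poly_sum; apply: eq_bigr => i _; apply: e. Qed.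

Lemma eqmodXM k p q r s : eqmodX k p q -> eqmodX k r s -> eqmodX k (p * r) (q * s).
Proof.
move=> /eqmodXP e1 /eqmodXP e2; apply/eqmodXP => i ik; rewrite !coefM.
apply: eq_bigr => j _; rewrite e1 ?e2 //; apply: leq_ltn_trans ik.
  by rewrite leq_subr.
by rewrite -ltnS.
Qed.

Lemma eqmodX_exp k m p q : eqmodX k p q -> eqmodX k (p ^+ m) (q ^+ m).
Proof.
by move=> e; elim: m => [|m IH]; rewrite ?expr0 // !exprS; apply: eqmodXM.
Qed.

Lemma eqmodX_deriv k p q : eqmodX k.+1 p q -> eqmodX k p^`() q^`().
Proof.
by move=> /eqmodXP e; apply/eqmodXP => i ik; rewrite !coef_deriv e.
Qed.

Lemma eqmodX_mul0 a b p q : eqmodX a p 0 -> eqmodX b q 0 -> eqmodX (a + b) (p * q) 0.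
Proof.
move=> /eqmodXP hp /eqmodXP hq; apply/eqmodXP => i ik; rewrite coefM coef0 big1 // => j _.
have [ja|ja] := ltnP j a; first by rewrite hp ?coef0 ?mul0r.
rewrite hq ?coef0 ?mulr0 //; have := ltn_ord j; lia.
Qed.

Lemma eqmodX_mull a b p q r : eqmodX a r 0 -> eqmodX b p q ->
  eqmodX (a + b) (r * p) (r * q).
Proof.
move=> hr /eqmodX_subr hpq; apply/eqmodX_subr.
by rewrite -mulrBr; apply: eqmodX_mul0.
Qed.

Lemma eqmodX_exp0 m p : eqmodX 1 p 0 -> eqmodX m (p ^+ m) 0.
Proof.
move=> hp; elim: m => [|m IH]; first by rewrite /eqmodX !take_poly0l.
by rewrite exprS; apply: (eqmodX_mul0 hp IH).
Qed.

Lemma eqmodX1X : eqmodX 1 'X 0.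
Proof. by apply/eqmodXP => -[|//] _; rewrite coefX coef0. Qed.

Lemma eqmodX_mulKl k g p q : g`_0 = 1 -> eqmodX k (g * p) (g * q) -> eqmodX k p q.
Proof.
move=> g0 /eqmodX_subr; rewrite -mulrBr => e; apply/eqmodX_subr.
move: (p - q) e => x /eqmodXP e; apply/eqmodXP.
elim: k e => [|k IH] e i; first by [].
have ek j : (j < k)%N -> x`_j = 0.
  by move=> jk; rewrite (IH _ j jk) ?coef0 // => l lk; apply: e; apply: ltnW.
rewrite coef0 ltnS leq_eqVlt => /orP [/eqP ->|]; last exact: ek.
have := e k (ltnSn k); rewrite coef0 coefM big_ord_recl g0 mul1r subn0 big1 ?addr0 //.
by move=> j _; rewrite ek ?mulr0 // lift0; have := ltn_ord j; lia.
Qed.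

End EqModX.

Lemma eqmodX_map (R S : comNzRingType) (f : {additive R -> S}) k
    (p q : {poly R}) :
  eqmodX k p q -> eqmodX k (map_poly f p) (map_poly f q).
Proof. by move=> /eqmodXP e; apply/eqmodXP => i ik; rewrite !coef_map e. Qed.

Section CompSeries.
Variable R : comNzRingType.
Implicit Types (c : nat -> R) (p q r : {poly R}).

Definition comp_series c N p := \sum_(m < N.+1) c m *: p ^+ m.
Definition comp_dseries c N p := \sum_(m < N.+1) (c m *+ m) *: p ^+ m.-1.

Lemma comp_seriesS c N p : comp_series c N.+1 p = comp_series c N p + c N.+1 *: p ^+ N.+1.
Proof. by rewrite /comp_series big_ord_recr. Qed.

Lemma eqmodX_comp_series k c N p q :
  eqmodX k p q -> eqmodX k (comp_series c N p) (comp_series c N q).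
Proof. by move=> e; apply: eqmodX_sum => m; apply/eqmodXZ/eqmodX_exp. Qed.

Lemma comp_series_trunc c n N p : (n <= N)%N -> eqmodX 1 p 0 ->
  eqmodX n.+1 (comp_series c N p) (comp_series c n p).
Proof.
move=> /subnKC <- p0; elim: (N - n)%N => [|d IH]; first by rewrite addn0.
apply: eqmodX_trans IH; rewrite addnS comp_seriesS -[X in eqmodX _ _ X]addr0.
apply: eqmodXD => //; rewrite -(scaler0 _ (c (n + d).+1)); apply: eqmodXZ.
by apply: (eqmodXW _ (eqmodX_exp0 _ p0)); rewrite ltnS leq_addr.
Qed.

Lemma comp_series_coefS_add c k r d : eqmodX 1 r 0 -> eqmodX k.+1 d 0 ->
  (comp_series c k.+1 (r + d))`_k.+1 = (comp_series c k.+1 r)`_k.+1 + c 1%N * d`_k.+1.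
Proof.
move=> r0 d0.
have rd0 : eqmodX 1 (r + d) 0.
  by rewrite -[0]addr0; apply: eqmodXD r0 (eqmodXW _ d0).
have high m : eqmodX k.+2 ((r + d) ^+ m.+2) (r ^+ m.+2).
  have rdr : eqmodX k.+1 (r + d) r by rewrite -[X in eqmodX _ _ X]addr0; apply: eqmodXD.
  rewrite exprS; apply: eqmodX_trans (eqmodX_mull rd0 (eqmodX_exp m.+1 rdr)) _.
  rewrite mulrDl -exprS -[X in eqmodX _ _ X]addr0; apply: eqmodXD => //.
  by apply: (eqmodXW _ (eqmodX_mul0 d0 (eqmodX_exp0 m.+1 r0))); lia.
rewrite /comp_series !coef_sum !big_ord_recl /= !expr0 !expr1.
have -> : \sum_(i < k) (c i.+2 *: (r + d) ^+ i.+2)`_k.+1 =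
          \sum_(i < k) (c i.+2 *: r ^+ i.+2)`_k.+1.
  by apply: eq_bigr => i _; rewrite !coefZ (eqmodX_coef (high i)).
by rewrite scalerDr coefD !coefZ; ring.
Qed.

Section Derivation.
Variable D : {additive {poly R} -> {poly R}}.
Hypothesis DM : forall p q, D (p * q) = D p * q + p * D q.

Lemma derivation_exp p m : D (p ^+ m) = (p ^+ m.-1 * D p) *+ m.
Proof.
elim: m => [|[|m] IH].
- have := DM 1 1; rewrite !mulr1 mul1r -[D 1 in LHS]add0r => /addIr <-.
  by rewrite expr0.
- by rewrite expr1 expr0 mul1r.
- by rewrite exprS DM IH /= -mulrnAr mulrA [D p * _]mulrC -exprS [RHS]mulrS mulrnAr.
Qed.

Lemma derivation_comp_series c N p : D (comp_series c N p) =
  \sum_(m < N.+1) D (c m)%:P * p ^+ m + comp_dseries c N p * D p.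
Proof.
rewrite /comp_series /comp_dseries raddf_sum mulr_suml -big_split.
apply: eq_bigr => m _ /=; rewrite -!mul_polyC DM derivation_exp.
by rewrite polyCMn !mulrnAl mulrnAr mulrA.
Qed.

End Derivation.

Lemma deriv_comp_series c N p :
  (comp_series c N p)^`() = comp_dseries c N p * p^`().
Proof.
rewrite (derivation_comp_series (@derivM R)) big1 ?add0r // => m _.
by rewrite /= derivC mul0r.
Qed.

End CompSeries.

Lemma map_comp_series (R S : comNzRingType) (f : {rmorphism R -> S})
    (c : nat -> R) N (p : {poly R}) :
  map_poly f (comp_series c N p) = comp_series (f \o c) N (map_poly f p).
Proof.
rewrite rmorph_sum; apply: eq_bigr => m _.
by rewrite -!mul_polyC rmorphM rmorphXn /= (map_polyC f).
Qed.

(* For p : {poly {poly R}}, read as a series in t over R[a], [map_poly deriv p]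
   is the derivative in a and [p^`()] the derivative in t. *)
Section CoefDerivative.
Variable R : comNzRingType.
Implicit Types p q : {poly {poly R}}.

Lemma map_poly_derivM p q :
  map_poly deriv (p * q) = map_poly deriv p * q + p * map_poly deriv q.
Proof.
apply/polyP => i; rewrite coefD !coef_map !coefM -big_split raddf_sum /=.
by apply: eq_bigr => j _; rewrite derivM !coef_map.
Qed.

Lemma map_poly_deriv_comp_series (c : nat -> {poly R}) N p :
  map_poly deriv (comp_series c N p) =
  comp_series (fun m => (c m)^`()) N p + comp_dseries c N p * map_poly deriv p.
Proof.
rewrite (derivation_comp_series map_poly_derivM); congr (_ + _).
by apply: eq_bigr => m _; rewrite -[X in X * _]/(map_poly deriv _) map_polyC mul_polyC.
Qed.

End CoefDerivative.

Lemma comp_series_inverse_deriv (R : comNzRingType) (c : nat -> R) N (p : {poly R}) :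
  eqmodX N.+1 (comp_series c N p) 'X -> eqmodX N (comp_dseries c N p * p^`()) 1.
Proof. by move=> /eqmodX_deriv; rewrite deriv_comp_series derivX. Qed.

Lemma map_poly_derivX (R : comNzRingType) : map_poly (@deriv R) 'X = 0.
Proof.
apply/polyP => i; rewrite coef_map coefX coef0.
by case: (i == 1)%N; rewrite /= ?derivC ?deriv0.
Qed.

Lemma expma_coef0 : expma_coef 0 = 1.
Proof. by rewrite /expma_coef fact0 invr1 scale1r expr0. Qed.

Lemma deriv_expma_coef j : (expma_coef j.+1)^`() = - expma_coef j.
Proof.
rewrite /expma_coef derivZ deriv_exp derivN derivX /= -scalerN.
rewrite mulN1r -scaler_nat scalerA; congr (_ *: _).
by rewrite factS natrM invfM mulrAC mulVf ?mul1r // pnatr_eq0.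
Qed.

Lemma deriv_expm1_coef i : (expm1_coef i)^`() = 0.
Proof. by rewrite /expm1_coef; case: ifP; rewrite ?derivC ?deriv0. Qed.

Lemma fcoef0 : fcoef 0 = 0.
Proof. by rewrite /fcoef big_ord1 /expm1_coef /= mulr0. Qed.

Lemma fcoef1 : fcoef 1 = 1.
Proof.
rewrite /fcoef big_ord_recl big_ord1 /= expma_coef0 /expm1_coef /= mulr0 addr0.
by rewrite mul1r invr1.
Qed.

Lemma deriv_fcoef m : (fcoef m.+1)^`() = - fcoef m.
Proof.
rewrite /fcoef raddf_sum big_ord_recl /= derivM deriv_expm1_coef mulr0.
rewrite expma_coef0 derivC mul0r !add0r -sumrN; apply: eq_bigr => j _.
by rewrite derivM deriv_expm1_coef mulr0 addr0 deriv_expma_coef subSS mulNr.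
Qed.

Lemma horner0_fcoef m : (fcoef m).[0] = if (0 < m)%N then (m`!%:R)^-1 else 0.
Proof.
rewrite /fcoef horner_sum big_ord_recl /= hornerM expma_coef0 hornerC mul1r subn0.
rewrite big1 ?addr0; first by rewrite /expm1_coef; case: ifP; rewrite hornerC.
move=> j _; rewrite hornerM /expma_coef hornerZ horner_exp hornerN hornerX oppr0.
by rewrite expr0n /= mulr0 mul0r.
Qed.

Lemma comp_series_deriv_fcoef N (p : {poly {poly rat}}) :
  comp_series (fun m => (fcoef m)^`()) N.+1 p = - (p * comp_series fcoef N p).
Proof.
rewrite /comp_series big_ord_recl /= fcoef0 deriv0 scale0r add0r mulr_sumr -sumrN.
by apply: eq_bigr => i _; rewrite deriv_fcoef exprS scaleNr scalerAr.
Qed.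

Lemma coef0_comp_dseries_fcoef N (p : {poly {poly rat}}) : eqmodX 1 p 0 ->
  (comp_dseries fcoef N.+1 p)`_0 = 1.
Proof.
move=> p0; rewrite /comp_dseries coef_sum !big_ord_recl /= fcoef0 fcoef1.
rewrite mul0rn scale0r coef0 add0r mulr1n expr0 scale1r coef1 big1 ?addr0 // => i _.
by rewrite coefZ (eqmodX_coef (eqmodX_exp0 i.+1 p0)) ?coef0 ?mulr0.
Qed.

Lemma comp_dseries_horner0_fcoef N (q : {poly rat}) :
  comp_dseries (fun m => (fcoef m).[0]) N.+1 q =
  1 + comp_series (fun m => (fcoef m).[0]) N q.
Proof.
rewrite /comp_dseries /comp_series big_ord_recl big_ord_recl [in RHS]big_ord_recl /=.
rewrite !horner0_fcoef /= mul0rn !scale0r !add0r mulr1n expr0 invr1 scale1r.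
congr (_ + _); apply: eq_bigr => i _; rewrite !horner0_fcoef /=; congr (_ *: _).
rewrite /bump /= !add1n factS natrM -mulr_natr; field.
by rewrite pnatr_eq0 -lt0n fact_gt0 -natrD pnatr_eq0.
Qed.

(* [inv_trunc k] is the truncation of L at order k; [inv_step] adds the unique
   t^{k+1} term fixing the coefficient of t^{k+1} in F(L). *)
Definition inv_step (p : {poly {poly rat}}) k :=
  p + ((k.+1 == 1)%:R - (comp_series fcoef k.+1 p)`_k.+1) *: 'X^(k.+1).

Fixpoint inv_trunc n := if n is k.+1 then inv_step (inv_trunc k) k else 0.

Definition lam_rec n := (inv_trunc n)`_n.

Lemma coef_inv_trunc n i : (inv_trunc n)`_i = if (i <= n)%N then lam_rec i else 0.
Proof.
elim: n i => [|k IH] i /=.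
  by rewrite coef0 leqn0; case: eqP => // ->; rewrite /lam_rec coef0.
rewrite leq_eqVlt; case: eqP => [-> //|ne].
rewrite coefD coefZ coefXn (negPf (introN eqP ne)) mulr0 addr0 IH ltnS.
by case: ltngtP ne => // ->.
Qed.

Lemma trunc_series_lam_rec n : trunc_series lam_rec n = inv_trunc n.
Proof. by apply/polyP => i; rewrite coef_poly coef_inv_trunc ltnS. Qed.

Lemma inv_trunc_eqmodX0 n : eqmodX 1 (inv_trunc n) 0.
Proof. by apply/eqmodXP => -[|//] _; rewrite coef_inv_trunc /lam_rec /= !coef0. Qed.

Lemma lam_rec_comp_inverse : is_comp_inverse lam_rec.
Proof.
split=> [|N n nN]; first by rewrite /lam_rec coef0.
rewrite trunc_series_lam_rec.
have -> : (comp_series fcoef N (inv_trunc N))`_n = (comp_series fcoef n (inv_trunc n))`_n.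
  apply: (eqmodX_coef _ (ltnSn n)).
  apply: eqmodX_trans (comp_series_trunc _ nN (inv_trunc_eqmodX0 N)) _.
  apply: eqmodX_comp_series; apply/eqmodXP => i ilt.
  by rewrite !coef_inv_trunc (leq_trans _ nN) // -ltnS ilt.
case: n nN => [_|k _].
  by rewrite /comp_series big_ord1 fcoef0 scale0r coef0.
rewrite /= /inv_step comp_series_coefS_add.
- by rewrite fcoef1 mul1r coefZ coefXn eqxx mulr1 addrC subrK.
- exact: inv_trunc_eqmodX0.
- by apply/eqmodXP => i ik; rewrite coefZ coefXn (ltn_eqF ik) mulr0 coef0.
Qed.

Lemma coef_mulX_deriv (R : comNzRingType) (p : {poly R}) i :
  ('X * p^`())`_i = p`_i *+ i.
Proof. by rewrite coefXM coef_deriv; case: i => [|i] /=; rewrite ?mulr0n. Qed.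

Section CompInverse.
Variable lam : nat -> {poly rat}.
Hypothesis lam_inv : is_comp_inverse lam.
Local Notation L N := (trunc_series lam N).

Lemma comp_trunc_series N : eqmodX N.+1 (comp_series fcoef N (L N)) 'X.
Proof. by apply/eqmodXP => n nN; rewrite coefX (lam_inv.2 N n). Qed.

Lemma trunc_series_eqmodX0 N : eqmodX 1 (L N) 0.
Proof. by apply/eqmodXP => -[|//] _; rewrite coef_poly lam_inv.1 coef0. Qed.

Lemma lam1 : lam 1 = 1.
Proof.
have := lam_inv.2 1%N 1%N (leqnn 1); rewrite big_ord_recl big_ord1 /= fcoef0 fcoef1.
by rewrite scale0r add0r scale1r expr1 coef_poly.
Qed.

Lemma trunc_series_pde M :
  eqmodX M.+2 (map_poly deriv (L M.+1)) ('X * (L M.+1)^`() * L M.+1).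
Proof.
set N := M.+1; set p := L N; set G := comp_dseries fcoef N p.
have p0 : eqmodX 1 p 0 := trunc_series_eqmodX0 N.
have hF : eqmodX N.+1 (comp_series fcoef N p) 'X := comp_trunc_series N.
have hDa : eqmodX N.+1 (G * map_poly deriv p) (p * 'X).
  have e := eqmodX_map deriv hF.
  rewrite map_poly_derivX map_poly_deriv_comp_series comp_series_deriv_fcoef -/G in e.
  have := eqmodXD (eqmodX_refl _ (p * comp_series fcoef M p)) e.
  rewrite addNKr addr0 => /eqmodX_trans; apply.
  have hFM : eqmodX N (comp_series fcoef M p) 'X.
    have hMN := comp_series_trunc fcoef (leqnSn M) p0.
    exact: eqmodX_trans (eqmodX_sym hMN) (eqmodXW _ hF).
  exact: eqmodX_mull p0 hFM.
have hDt : eqmodX N.+1 (G * ('X * p^`() * p)) (p * 'X).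
  have pX0 : eqmodX 2 (p * 'X) 0 := eqmodX_mul0 p0 (eqmodX1X _).
  have := eqmodX_mull pX0 (comp_series_inverse_deriv hF); rewrite mulr1.
  have -> : G * ('X * p^`() * p) = p * 'X * (G * p^`()) by ring.
  exact: eqmodXW.
apply: eqmodX_mulKl (coef0_comp_dseries_fcoef M p0) _.
exact: eqmodX_trans hDa (eqmodX_sym hDt).
Qed.

Lemma deriv_lam M :
  (lam M.+1)^`() = \sum_(1 <= k < M.+1) k%:R *: (lam (M.+1 - k) * lam k).
Proof.
have := eqmodX_coef (trunc_series_pde M) (ltnSn M.+1).
rewrite coef_map coef_poly ltnSn /= => ->.
rewrite coefM -(big_mkord xpredT (fun j => ('X * _^`())`_j * _`_(_ - j))).
rewrite big_ltn // big_nat_recr //= !coef_mulX_deriv mulr0n mul0r add0r.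
rewrite subnn [(L _)`_0]coef_poly /= lam_inv.1 mulr0 addr0.
apply: eq_big_nat => k /andP [k1 kM].
rewrite coef_mulX_deriv !coef_poly !ltnS (ltnW kM) leq_subr.
by rewrite mulrnAl scaler_nat mulrC.
Qed.

Local Notation ev := (map_poly (horner_eval (0 : rat))).

Lemma coef_ev_trunc_series N i : (ev (L N))`_i = if (i <= N)%N then (lam i).[0] else 0.
Proof. by rewrite coef_map coef_poly ltnS; case: ifP => //= _; rewrite rmorph0. Qed.

Lemma log1p_deriv M : eqmodX M.+1 ((1 + 'X) * (ev (L M.+1))^`()) 1.
Proof.
set N := M.+1; set q := ev (L N).
have q0 : eqmodX 1 q 0.
  by have := eqmodX_map (horner_eval 0) (trunc_series_eqmodX0 N); rewrite rmorph0.
have hF : eqmodX N.+1 (comp_series (fun m => (fcoef m).[0]) N q) 'X.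
  have := eqmodX_map (horner_eval 0) (comp_trunc_series N).
  by rewrite map_comp_series map_polyX.
have := comp_series_inverse_deriv hF; rewrite comp_dseries_horner0_fcoef.
apply: eqmodX_trans; apply: eqmodXM (eqmodX_refl _ _); apply: eqmodXD (eqmodX_refl _ 1) _.
apply: eqmodX_trans (eqmodX_sym (eqmodXW _ hF)) _ => //.
exact: comp_series_trunc.
Qed.

Lemma horner0_lam j : (lam j.+1).[0] = (-1) ^+ j / j.+1%:R.
Proof.
elim: j => [|j IH]; first by rewrite lam1 hornerC expr0 divr1.
have := eqmodX_coef (log1p_deriv j.+1) (ltnSn j.+1).
rewrite mulrDl mul1r coefD coefXM coef1 /= !coef_deriv.
rewrite !coef_ev_trunc_series leqnn ltnW //.
move=> /eqP; rewrite addr_eq0 => /eqP h.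
have hj : (j.+2%:R : rat) != 0 by rewrite pnatr_eq0.
have -> : (lam j.+2).[0] = - ((lam j.+1).[0] *+ j.+1) / j.+2%:R.
  by rewrite -h -[_ *+ _]mulr_natr mulfK.
by rewrite IH -mulNrn -[_ *+ _]mulr_natr mulNr mulfVK ?pnatr_eq0 // exprS mulN1r.
Qed.

End CompInverse.

Theorem lemma6p8 :
  (exists lam : nat -> {poly rat}, is_comp_inverse lam) /\
  forall lam : nat -> {poly rat}, is_comp_inverse lam ->
    (forall n : nat, (1 <= n)%N ->
       (lam n)^`() = \sum_(1 <= k < n) k%:R *: (lam (n - k)%N * lam k)) /\
    (forall n : nat, (1 <= n)%N ->
       (lam n).[0] = (-1) ^+ (n - 1) / n%:R) /\
    lam 1%N = 1.
Proof.
split; first by exists lam_rec; exact: lam_rec_comp_inverse.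
move=> lam lam_inv; split; [|split].
- by move=> [//|M] _; rewrite (deriv_lam lam_inv M).
- by move=> [//|j] _; rewrite (horner0_lam lam_inv j) subSS subn0.
- exact: lam1 lam_inv.
Qed.
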